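(* Let $m\equiv3\pmod8$ and $\mathfrak n_m^{(p_+,p_-)}=(\mathfrak v_m^+)^{p_+}\oplus(\mathfrak v_m^-)^{p_-}\oplus\mathbb R^m$. If ${\rm Lag}(\mathfrak n_m^{(p_+,p_-)})\neq\emptyset$, then $p_+=p_-$.
   Context: $C(m)$ is the real Clifford algebra of $\mathbb R^m$ (relations $z^2=-\langle z,z\rangle1$). For $m\equiv3\pmod4$, with $z_1,\dots,z_m$ a fixed orthonormal basis and $K_m=J_{z_1}\cdots J_{z_m}$, there are two irreducible $C(m)$-modules up to isomorphism, $\mathfrak v_m^\pm$, on which $K_m$ acts as $\pm\mathrm{Id}$. Modules carry inner products making each $J_z$ skew-symmetric, and $\mathfrak n_m^{(p_+,p_-)}$ is the Lie algebra of Heisenberg type with $\mathbb R^m$ central and $\langle z,[u,v]\rangle=(J_zu,v)$ on $\mathfrak v=(\mathfrak v_m^+)^{p_+}\oplus(\mathfrak v_m^-)^{p_-}$. ${\rm Lag}(\mathfrak n)$ is the set of subspaces $\mathcal L\subset\mathfrak v$ with $[\mathcal L,\mathcal L]=0$ and $\dim\mathcal L=\frac12\dim\mathfrak v$. *)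

From HB Require Import structures.
From mathcomp Require Import all_boot all_order all_algebra.
From mathcomp Require Import reals.
Set Implicit Arguments. Unset Strict Implicit. Unset Printing Implicit Defensive.
Import Order.TTheory GRing.Theory Num.Theory.
Local Open Scope ring_scope.

(* A representation of the real Clifford algebra C(m) on the inner product
   space R^n (row vectors, standard inner product (u,v) = u *m v^T) is given by
   J : 'I_m -> 'M[R]_n, where J i is the matrix of J_{z_i} (z_1..z_m the fixed
   orthonormal basis of R^m) acting on the RIGHT of row vectors:
   J_{z_i}(u) = u *m J i. *)

Section Clifford.
Variable R : realType.

(* Clifford relations: J_{z_i} J_{z_j} + J_{z_j} J_{z_i} = -2 <z_i,z_j> Id,
   equivalent (by bilinearity) to z^2 = -<z,z> 1 for all z. *)
Definition clifford_rel (m n : nat) (J : 'I_m -> 'M[R]_n) : Prop :=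
  forall i j : 'I_m,
    J i *m J j + J j *m J i = - ((2 * (i == j)%:R) *: 1%:M).

Definition skew_rep (m n : nat) (J : 'I_m -> 'M[R]_n) : Prop :=
  forall i, (J i)^T = - J i.

Definition invariant_sub (m n : nat) (J : 'I_m -> 'M[R]_n) (U : 'M[R]_n) : Prop :=
  forall i, (U *m J i <= U)%MS.

Definition irreducible_rep (m n : nat) (J : 'I_m -> 'M[R]_n) : Prop :=
  (0 < n)%N /\
  forall U : 'M[R]_n, invariant_sub J U -> \rank U = 0%N \/ \rank U = n.

(* Matrix of the operator K_m = J_{z_1} o J_{z_2} o ... o J_{z_m}.
   With right action, u |-> K_m(u) is u *m (J_m *m ... *m J_1). *)
Definition Kmat (m n : nat) (J : 'I_m -> 'M[R]_n) : 'M[R]_n :=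
  foldl (fun acc i => J i *m acc) 1%:M (enum 'I_m).

Definition clifford_module (m n : nat) (J : 'I_m -> 'M[R]_n) : Prop :=
  clifford_rel J /\ skew_rep J.

(* v_m^+ (s = true) / v_m^- (s = false): irreducible module with K_m = +-Id *)
Definition irr_module_sign (m n : nat) (J : 'I_m -> 'M[R]_n) (s : bool) : Prop :=
  clifford_module J /\ irreducible_rep J /\
  Kmat J = (if s then 1%:M else - 1%:M).

Definition sum_dim (d e p q : nat) : nat :=
  (\sum_(k < p) d + \sum_(k < q) e)%N.

Definition sum_rep (m d e : nat) (Jp : 'I_m -> 'M[R]_d) (Jm : 'I_m -> 'M[R]_e)
  (p q : nat) : 'I_m -> 'M[R]_(sum_dim d e p q) :=
  fun i => block_mx (@mxdiag R p (fun _ => d) (fun _ => Jp i)) 0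
                    0 (@mxdiag R q (fun _ => e) (fun _ => Jm i)).

(* Lie bracket of the H-type algebra on v, with values in the centre R^m
   (coordinates in the orthonormal basis z_i): <z_i,[u,v]> = (J_{z_i} u, v). *)
Definition hbracket (m n : nat) (J : 'I_m -> 'M[R]_n) (u v : 'rV[R]_n) : 'rV[R]_m :=
  \row_i (u *m J i *m v^T) 0 0.

Definition is_lagrangian (m n : nat) (J : 'I_m -> 'M[R]_n) (L : 'M[R]_n) : Prop :=
  (forall u v : 'rV[R]_n, (u <= L)%MS -> (v <= L)%MS -> hbracket J u v = 0)
  /\ (2 * \rank L)%N = n.

Definition Lag_nonempty (m n : nat) (J : 'I_m -> 'M[R]_n) : Prop :=
  exists L : 'M[R]_n, is_lagrangian J L.

End Clifford.

From HB Require Import structures.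
From mathcomp Require Import all_boot all_order all_algebra.
From mathcomp Require Import reals.
From mathcomp Require Import zify.
Set Implicit Arguments. Unset Strict Implicit. Unset Printing Implicit Defensive.
Import Order.TTheory GRing.Theory Num.Theory.
Local Open Scope ring_scope.

(* Only the oddness of m matters.  If L is Lagrangian, M := L J_{z_1} is an
   orthogonal complement of L and every J_z exchanges L and M; so does the
   product K_m of an odd number of the J_z, whence tr K_m = 0.  On
   (v^+)^{p_+} (+) (v^-)^{p_-} this trace is p_+ dim v^+ - p_- dim v^-.
   Moreover dim v^+ = dim v^-: the operator prod_i (1 + T_i) on matrices X,
   with T_i X = J^+_{z_i} X J^-_{z_i}, has its image made of intertwiners
   between J^+ and -J^-.  Expanding the product, its trace is a sum over
   Clifford monomials of tr(J^+-monomial) tr(J^- -monomial); only the empty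
   and the full monomial contribute, both with dim v^+ dim v^- (the full one
   thanks to the signs of K_m), so the operator is nonzero and Schur's lemma
   applied to a nonzero intertwiner gives the equality. *)

Section CliffordMonomials.
Variables (R : realType) (m n : nat) (J : 'I_m -> 'M[R]_n).

Definition cmono (s : seq 'I_m) : 'M[R]_n := foldr (fun i A => J i *m A) 1%:M s.

Lemma cmono_rcons s i : cmono (rcons s i) = cmono s *m J i.
Proof. by elim: s => [|k s IH] /=; rewrite ?mul1mx ?mulmx1 // IH mulmxA. Qed.

Lemma Kmat_cmono : Kmat J = cmono (rev (enum 'I_m)).
Proof. by rewrite /Kmat -{1}(revK (enum _)) foldl_rev. Qed.

Hypothesis cJ : clifford_rel J.

Lemma clifford_sqr i : J i *m J i = - 1%:M.
Proof.
have := cJ i i; rewrite eqxx mulr1 -mulr2n -scaler_nat => /(congr1 ( *:%R 2^-1)).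
rewrite scalerA mulVf ?pnatr_eq0 // scale1r => ->.
by rewrite scalerN scalerA mulVf ?pnatr_eq0 // scale1r.
Qed.

Lemma clifford_anticomm i j : i != j -> J i *m J j = - (J j *m J i).
Proof.
move=> nij; have := cJ i j; rewrite (negbTE nij) mulr0 scale0r oppr0.
by move/eqP; rewrite addr_eq0 => /eqP.
Qed.

Lemma clifford_unitmx i : J i \in unitmx.
Proof.
have : J i *m - J i = 1%:M by rewrite mulmxN clifford_sqr opprK.
by case/mulmx1_unit.
Qed.

Lemma mulmx_cmono j s :
  J j *m cmono s = (-1) ^+ count (predC1 j) s *: (cmono s *m J j).
Proof.
elim: s => [|i s IH] /=; first by rewrite mul1mx mulmx1 scale1r.
rewrite mulmxA; case: (eqVneq i j) => [->|nij] /=.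
  by rewrite add0n -!mulmxA IH -scalemxAr.
rewrite clifford_anticomm 1?eq_sym // mulNmx -!mulmxA IH.
by rewrite exprS mulN1r scaleNr -scalemxAr.
Qed.

(* [J j] anticommutes with [cmono s], so conjugating by [J j] negates it. *)
Lemma mxtrace_cmono_odd j s : odd (count (predC1 j) s) -> \tr (cmono s) = 0.
Proof.
move=> odd_s; have C := mulmx_cmono j s.
rewrite -signr_odd odd_s expr1 scaleN1r in C.
have E : cmono s = J j *m cmono s *m J j.
  by rewrite C mulNmx -mulmxA clifford_sqr mulmxN mulmx1 opprK.
have : \tr (cmono s) = - \tr (cmono s).
  by rewrite {1}E mxtrace_mulC mulmxA clifford_sqr mulNmx mul1mx raddfN.
by move/eqP; rewrite -subr_eq0 opprK -mulr2n mulrn_eq0 /= => /eqP.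
Qed.

Hypothesis sJ : skew_rep J.

Lemma trmx_cmono s : (cmono s)^T = (-1) ^+ size s *: cmono (rev s).
Proof.
elim: s => [|i s IH] /=; first by rewrite trmx1 scale1r.
rewrite trmx_mul IH sJ rev_cons cmono_rcons mulmxN -scalemxAl.
by rewrite exprS mulN1r scaleNr.
Qed.

End CliffordMonomials.

Lemma count_predC1_notin (T : eqType) (j : T) s :
  j \notin s -> count (predC1 j) s = size s.
Proof.
move=> js; apply/eqP; rewrite -all_count; apply/allP => x xs /=.
by apply: contraNneq js => <-.
Qed.

Lemma exists_odd_count_predC1 (m : nat) (s : seq 'I_m) :
  uniq s -> (0 < size s < m)%N -> exists j, odd (count (predC1 j) s).
Proof.
move=> us /andP [s_gt0 s_ltm].
case odd_s: (odd (size s)).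
  have [j js | s_full] := pickP [pred j | j \notin s].
    by exists j; rewrite count_predC1_notin.
  have := uniq_leq_size (enum_uniq 'I_m) (fun x _ => negbFE (s_full x)).
  by rewrite size_enum_ord leqNgt s_ltm.
case: s us s_gt0 odd_s {s_ltm} => [|j s] //= /andP [js _] _.
by exists j; rewrite eqxx count_predC1_notin //; case: (odd _) odd_s.
Qed.

Section FullSwap.
Variables (F : fieldType) (n : nat) (L M K : 'M[F]_n).
Hypotheses (LM0 : (L :&: M = 0)%MS) (LMfull : row_full (L + M)%MS).
Hypotheses (LK : (L *m K <= M)%MS) (MK : (M *m K <= L)%MS).

Lemma mxtrace_swap : \tr K = 0.
Proof.
set P := proj_mx L M; set Q := 1%:M - P.
have PL : (P <= L)%MS by have := proj_mx_sub L M 1%:M; rewrite mul1mx.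
have QM : (Q <= M)%MS.
  by have := proj_mx_compl_sub (W := 1%:M) (submx_full _ LMfull); rewrite mul1mx.
have PP : P *m P = P by apply: proj_mx_id PL.
have QQ : Q *m Q = Q by rewrite {2}/Q mulmxBr mulmx1 proj_mx_0 ?subr0.
have PKP : P *m K *m P = 0.
  by apply: proj_mx_0 => //; exact: submx_trans (submxMr _ PL) LK.
have QKQ : Q *m K *m Q = 0.
  rewrite {2}/Q mulmxBr mulmx1 proj_mx_id ?subrr //.
  exact: submx_trans (submxMr _ QM) MK.
have -> : K = P *m K + Q *m K by rewrite -mulmxDl /Q addrC subrK mul1mx.
have tr0 X : X *m X = X -> X *m K *m X = 0 -> \tr (X *m K) = 0.
  by move=> XX XKX; rewrite -{1}XX -mulmxA mxtrace_mulC XKX mxtrace0.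
by rewrite mxtraceD tr0 // tr0 // addr0.
Qed.

End FullSwap.

Lemma trmx_mul_self_eq0 (R : realDomainType) n (x : 'rV[R]_n) :
  x *m x^T = 0 -> x = 0.
Proof.
move/(congr1 (fun A : 'M[R]_1 => A 0 0)); rewrite !mxE => xx0.
apply/rowP => k; rewrite mxE.
have sq_ge0 i : true -> 0 <= x 0 i * x^T i 0 by rewrite mxE -expr2 sqr_ge0.
have := psumr_eq0P sq_ge0 xx0 (i := k) isT.
by rewrite mxE => /eqP; rewrite mulf_eq0 orbb => /eqP.
Qed.

Section Lagrangian.
Variables (R : realType) (m n : nat) (J : 'I_m -> 'M[R]_n).
Hypotheses (cJ : clifford_rel J) (sJ : skew_rep J).
Variables (L : 'M[R]_n) (i0 : 'I_m).
Hypothesis lagL : is_lagrangian J L.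

Lemma lagrangian_bracket (u v : 'rV[R]_n) i :
  (u <= L)%MS -> (v <= L)%MS -> u *m J i *m v^T = 0.
Proof.
move=> uL vL; move: (lagL.1 _ _ uL vL) => /(congr1 (fun r : 'rV[R]_m => r 0 i)).
by rewrite mxE => uv0; rewrite [LHS]mx11_scalar uv0 mxE raddf0.
Qed.

(* [M] is orthogonal to [L] and has the complementary dimension, so it is
   the orthogonal complement of [L]. *)
Let M := L *m J i0.

Lemma lagrangian_orthoJ (u w : 'rV[R]_n) :
  (u <= L)%MS -> (w <= M)%MS -> u *m w^T = 0.
Proof.
move=> uL /submxP [D ->]; rewrite /M mulmxA trmx_mul sJ mulmxA mulmxN.
by rewrite mulNmx lagrangian_bracket ?oppr0 // mulmx_sub.
Qed.

Lemma lagrangian_capJ : (L :&: M = 0)%MS.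
Proof.
apply/eqP; rewrite -submx0; apply/rV_subP => x; rewrite sub_capmx => /andP [xL xM].
by rewrite (trmx_mul_self_eq0 (lagrangian_orthoJ xL xM)) sub0mx.
Qed.

Lemma lagrangian_addJ_full : row_full (L + M)%MS.
Proof.
rewrite /row_full mxrank_disjoint_sum ?lagrangian_capJ // /M mxrankMfree.
  by rewrite addnn -mul2n lagL.2.
by rewrite row_free_unit clifford_unitmx.
Qed.

Lemma lagrangian_orthoP (z : 'rV[R]_n) :
  (forall u : 'rV[R]_n, (u <= L)%MS -> u *m z^T = 0) -> (z <= M)%MS.
Proof.
move=> zL; have zLM : (z <= L + M)%MS by apply: submx_full lagrangian_addJ_full.
have := proj_mx_compl_sub zLM; have := proj_mx_sub L M z.
move: (z *m proj_mx L M) => y yL zyM.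
suff y0 : y = 0 by rewrite y0 subr0 in zyM.
apply: trmx_mul_self_eq0; have {2}-> : y = z - (z - y) by rewrite opprB addrC subrK.
by rewrite raddfB /= mulmxBr zL // lagrangian_orthoJ // subrr.
Qed.

Lemma lagrangian_mulJ i : (L *m J i <= M)%MS.
Proof.
apply/row_subP => k; rewrite row_mul; apply: lagrangian_orthoP => u uL.
by rewrite trmx_mul sJ mulNmx mulmxN mulmxA lagrangian_bracket ?oppr0 ?row_sub.
Qed.

Lemma lagrangian_complement_mulJ i : (M *m J i <= L)%MS.
Proof.
have MJ0 : (M *m J i0 <= L)%MS.
  by rewrite /M -mulmxA clifford_sqr // mulmxN mulmx1 eqmx_opp.
have [->|ni] := eqVneq i i0; first exact: MJ0.
rewrite /M -mulmxA (clifford_anticomm cJ (i := i0)) 1?eq_sym // mulmxN eqmx_opp mulmxA.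
exact: submx_trans (submxMr _ (lagrangian_mulJ i)) MJ0.
Qed.

Lemma lagrangian_mul_cmono s :
  (L *m cmono J s <= if odd (size s) then M else L)%MS &&
  (M *m cmono J s <= if odd (size s) then L else M)%MS.
Proof.
elim: s => [|i s IH] /=; first by rewrite !mulmx1 !submx_refl.
case/andP: IH => LC MC; rewrite !mulmxA; apply/andP; split.
  by apply: submx_trans (submxMr _ (lagrangian_mulJ i)) _; case: odd MC.
by apply: submx_trans (submxMr _ (lagrangian_complement_mulJ i)) _; case: odd LC.
Qed.

Lemma lagrangian_mxtrace_cmono s : odd (size s) -> \tr (cmono J s) = 0.
Proof.
move=> odd_s; have /andP [] := lagrangian_mul_cmono s; rewrite odd_s.
exact: mxtrace_swap lagrangian_capJ lagrangian_addJ_full.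
Qed.

End Lagrangian.

Lemma lagrangian_mxtrace_Kmat (R : realType) m n (J : 'I_m -> 'M[R]_n) :
  odd m -> clifford_module J -> Lag_nonempty J -> \tr (Kmat J) = 0.
Proof.
case: m J => // m J odd_m [cJ sJ] [L lagL].
rewrite Kmat_cmono (lagrangian_mxtrace_cmono cJ sJ ord0 lagL) //.
by rewrite size_rev size_enum_ord.
Qed.

Lemma mul_mxdiag_const (R : pzRingType) k r (A B : 'M[R]_k) :
  mxdiag (fun _ : 'I_r => A) *m mxdiag (fun _ : 'I_r => B) =
  mxdiag (fun _ : 'I_r => A *m B).
Proof.
rewrite {2}/mxdiag mul_mxdiag_mxblock /mxdiag; apply/eq_mxblock => i j.
by case: (i == j); rewrite ?conform_mx_id ?mulmx0.
Qed.

Section SumRep.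
Variables (R : realType) (d e p q : nat).

Definition sum_blk (A : 'M[R]_d) (B : 'M[R]_e) : 'M[R]_(sum_dim d e p q) :=
  block_mx (mxdiag (fun _ : 'I_p => A)) 0 0 (mxdiag (fun _ : 'I_q => B)).

Lemma sum_blk_mul A B A' B' :
  sum_blk A B *m sum_blk A' B' = sum_blk (A *m A') (B *m B').
Proof. by rewrite mulmx_block !mulmx0 !mul0mx !addr0 !add0r !mul_mxdiag_const. Qed.

Lemma sum_blkD A B A' B' : sum_blk A B + sum_blk A' B' = sum_blk (A + A') (B + B').
Proof. by rewrite add_block_mx !addr0 -!mxdiagD. Qed.

Lemma sum_blkN A B : sum_blk (- A) (- B) = - sum_blk A B.
Proof. by rewrite /sum_blk opp_block_mx !oppr0 !mxdiagN. Qed.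

Lemma sum_blk_scalar (c : R) : sum_blk c%:M c%:M = c%:M.
Proof. by rewrite /sum_blk !mxdiagZ -scalar_mx_block. Qed.

Lemma tr_sum_blk A B : (sum_blk A B)^T = sum_blk A^T B^T.
Proof. by rewrite /sum_blk tr_block_mx !trmx0 !tr_mxdiag. Qed.

Lemma mxtrace_sum_blk_sign :
  \tr (sum_blk 1%:M (- 1%:M)) = (d * p)%:R - (e * q)%:R.
Proof.
rewrite /sum_blk mxtrace_block mxdiagN !mxdiagZ raddfN /= !mxtrace1.
by rewrite !big_const_ord !iter_addn_0.
Qed.

Variables (m : nat) (Jp : 'I_m -> 'M[R]_d) (Jm : 'I_m -> 'M[R]_e).

Lemma sum_repE i : sum_rep Jp Jm p q i = sum_blk (Jp i) (Jm i).
Proof. by []. Qed.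

Lemma sum_rep_module :
  clifford_module Jp -> clifford_module Jm -> clifford_module (sum_rep Jp Jm p q).
Proof.
move=> [cp sp] [cm sm]; split=> [i j|i]; rewrite !sum_repE.
  by rewrite !sum_blk_mul sum_blkD cp cm !scalemx1 sum_blkN sum_blk_scalar.
by rewrite tr_sum_blk sp sm sum_blkN.
Qed.

Lemma Kmat_sum_rep : Kmat (sum_rep Jp Jm p q) = sum_blk (Kmat Jp) (Kmat Jm).
Proof.
rewrite /Kmat -(sum_blk_scalar 1); move: (1%:M : 'M[R]_d) (1%:M : 'M[R]_e).
by elim: (enum 'I_m) => [|i s IH] A B //=; rewrite -IH sum_repE sum_blk_mul.
Qed.

End SumRep.

Fixpoint subseqs (T : Type) (t : seq T) : seq (seq T) :=
  if t is i :: t' then subseqs t' ++ map (cons i) (subseqs t') else [:: [::]].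

Lemma subseqs_nil (T : Type) (t : seq T) : exists ss, subseqs t = [::] :: ss.
Proof. by elim: t => [|i t [ss /= ->]]; eexists. Qed.

Lemma mem_subseqs (T : eqType) (t s : seq T) : s \in subseqs t -> subseq s t.
Proof.
elim: t s => [|i t IH] s /=; first by rewrite inE => /eqP ->.
rewrite mem_cat => /orP [/IH st|/mapP [s' /IH st ->]]; last by rewrite /= eqxx.
exact: subseq_trans st (subseq_cons t i).
Qed.

Lemma irreducible_rep_opp (R : realType) m n (J : 'I_m -> 'M[R]_n) :
  irreducible_rep J -> irreducible_rep (fun i => - J i).
Proof.
case=> n_gt0 irrJ; split=> // U invU; apply: irrJ => i.
by rewrite -eqmx_opp -mulmxN invU.
Qed.

Lemma intertwiner_dim_eq (R : realType) m d e (J1 : 'I_m -> 'M[R]_d)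
    (J2 : 'I_m -> 'M[R]_e) (Y : 'M[R]_(d, e)) :
  irreducible_rep J1 -> irreducible_rep J2 -> Y != 0 ->
  (forall i, J1 i *m Y = Y *m J2 i) -> d = e.
Proof.
move=> [d_gt0 irr1] [_ irr2] Y_neq0 YJ.
have rkY : \rank Y = d.
  have invK : invariant_sub J1 (kermx Y).
    by move=> i; apply/sub_kermxP; rewrite -mulmxA YJ mulmxA mulmx_ker mul0mx.
  move: Y_neq0; rewrite -mxrank_eq0.
  by case: (irr1 _ invK); rewrite mxrank_ker; have := rank_leq_row Y; lia.
have invY : invariant_sub J2 <<Y>>%MS.
  by move=> i; rewrite genmxE (eqmxMr _ (genmxE Y)) -YJ submxMl.
by case: (irr2 _ invY); rewrite genmxE rkY // => d0; move: d_gt0; rewrite d0.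
Qed.

Section Averaging.
Variables (R : realType) (m d e : nat) (Jp : 'I_m -> 'M[R]_d) (Jm : 'I_m -> 'M[R]_e).

Definition twist i (Y : 'M[R]_(d, e)) := Jp i *m Y *m Jm i.

Fixpoint average (t : seq 'I_m) (X : 'M[R]_(d, e)) : 'M[R]_(d, e) :=
  if t is i :: t' then average t' X + twist i (average t' X) else X.

Lemma averageE t X :
  average t X = \sum_(s <- subseqs t) cmono Jp s *m X *m cmono Jm (rev s).
Proof.
elim: t => [|i t IH] /=; first by rewrite big_seq1 mul1mx mulmx1.
rewrite big_cat big_map /= IH /twist mulmx_sumr mulmx_suml; congr (_ + _).
by apply: eq_bigr => s _; rewrite rev_cons cmono_rcons !mulmxA.
Qed.

Lemma sum_mul_delta_mx (A : 'M[R]_d) (B : 'M[R]_e) :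
  \sum_a \sum_b (A *m delta_mx a b *m B) a b = \tr A * \tr B.
Proof.
rewrite /mxtrace mulr_suml; apply: eq_bigr => a _; rewrite mulr_sumr.
apply: eq_bigr => b _; rewrite !mxE (bigD1 b) //= big1 ?addr0 => [|k nkb].
  congr (_ * _); rewrite mxE (bigD1 a) //= big1 ?addr0 => [|l nla].
    by rewrite mxE !eqxx mulr1.
  by rewrite mxE (negbTE nla) mulr0.
by rewrite mxE big1 ?mul0r // => l _; rewrite mxE (negbTE nkb) andbF mulr0.
Qed.

(* The left side is the trace of the linear map [average t] on ['M_(d, e)]. *)
Lemma sum_average_delta_mx t :
  \sum_a \sum_b (average t (delta_mx a b)) a b =
  \sum_(s <- subseqs t) \tr (cmono Jp s) * \tr (cmono Jm (rev s)).
Proof.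
under eq_bigr do under eq_bigr do rewrite averageE summxE.
under eq_bigr do rewrite exchange_big /=.
by rewrite exchange_big /=; apply: eq_bigr => s _; rewrite sum_mul_delta_mx.
Qed.

Hypotheses (cp : clifford_rel Jp) (cm : clifford_rel Jm).

Lemma twistK i : involutive (twist i).
Proof.
move=> Y; rewrite /twist !mulmxA clifford_sqr // -!mulmxA clifford_sqr //.
by rewrite mulmxN mulmx1 mulNmx mul1mx opprK.
Qed.

Lemma twistC i j Y : twist i (twist j Y) = twist j (twist i Y).
Proof.
have [->//|nij] := eqVneq i j.
rewrite /twist !mulmxA clifford_anticomm // -!mulmxA.
rewrite (clifford_anticomm cm (i := j)) 1?eq_sym //.
by rewrite mulmxN mulNmx mulmxN opprK !mulmxA.
Qed.

Lemma twistD i Y Z : twist i (Y + Z) = twist i Y + twist i Z.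
Proof. by rewrite /twist mulmxDr mulmxDl. Qed.

Lemma average_twist t X j : j \in t -> twist j (average t X) = average t X.
Proof.
elim: t => [|i t IH] //=; rewrite in_cons.
have [->|nji] /= := eqVneq j i; first by rewrite twistD twistK addrC.
by move=> jt; rewrite twistD twistC IH.
Qed.

Lemma average_intertwines t X j :
  j \in t -> Jp j *m average t X = average t X *m - Jm j.
Proof.
move/(average_twist X); rewrite /twist => /(congr1 (mulmx^~ (Jm j))).
by rewrite -mulmxA clifford_sqr // mulmxN mulmx1 mulmxN => <-; rewrite opprK.
Qed.

End Averaging.

Section SignedModules.
Variables (R : realType) (m d e : nat) (Jp : 'I_m -> 'M[R]_d) (Jm : 'I_m -> 'M[R]_e).
Hypothesis odd_m : odd m.
Hypotheses (hJp : irr_module_sign Jp true) (hJm : irr_module_sign Jm false).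

(* The term is [d * e] for the empty and the full monomial, and 0 otherwise. *)
Lemma mxtrace_cmono_subseq_ge0 s :
  s \in subseqs (rev (enum 'I_m)) ->
  0 <= \tr (cmono Jp s) * \tr (cmono Jm (rev s)).
Proof.
case: hJp hJm => [[cp _] [_ Kp]] [[_ sm] [_ Km]] /mem_subseqs st.
have us : uniq s by rewrite (subseq_uniq st) // rev_uniq enum_uniq.
have le_s_m : (size s <= m)%N by have := size_subseq st; rewrite size_rev size_enum_ord.
case: s => [|i s'] in st us le_s_m *; first by rewrite !mxtrace1 mulr_ge0.
have [s_full|s_lt_m] := eqVneq (size (i :: s')) m.
  have /eqP -> : i :: s' == rev (enum 'I_m).
    by rewrite -(size_subseq_leqif st) size_rev size_enum_ord s_full.
  rewrite -Kmat_cmono Kp mxtrace1 -mxtrace_tr trmx_cmono // revK -Kmat_cmono Km.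
  by rewrite size_enum_ord -signr_odd odd_m scaleN1r opprK mxtrace1 mulr_ge0.
have [j /(mxtrace_cmono_odd cp) ->] : exists j, odd (count (predC1 j) (i :: s')).
  by apply: exists_odd_count_predC1 => //=; rewrite ltn_neqAle s_lt_m le_s_m.
by rewrite mul0r.
Qed.

Lemma sum_average_delta_mx_gt0 :
  0 < \sum_a \sum_b (average Jp Jm (rev (enum 'I_m)) (delta_mx a b)) a b.
Proof.
rewrite sum_average_delta_mx; have [ss def_ss] := subseqs_nil (rev (enum 'I_m)).
have [[_ [[d_gt0 _] _]] [_ [[e_gt0 _] _]]] := (hJp, hJm).
rewrite def_ss big_cons /= !mxtrace1 ltr_pwDl ?mulr_gt0 ?ltr0n //.
rewrite big_seq sumr_ge0 // => s ss_s; apply: mxtrace_cmono_subseq_ge0.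
by rewrite def_ss in_cons ss_s orbT.
Qed.

Lemma irr_module_sign_dim_eq : d = e.
Proof.
have [[[cp _] [irrp _]] [[cm _] [irrm _]]] := (hJp, hJm).
set Y := average Jp Jm (rev (enum 'I_m)).
have [[a b] /= Yab_neq0 | Y0] := pickP [pred ab | Y (delta_mx ab.1 ab.2) != 0].
  apply: (intertwiner_dim_eq irrp (irreducible_rep_opp irrm) Yab_neq0) => j.
  by apply: average_intertwines; rewrite // mem_rev mem_enum.
have := sum_average_delta_mx_gt0; rewrite big1 ?ltxx // => a _.
rewrite big1 // => b _; move/negbFE/eqP: (Y0 (a, b)) => /= Yab0.
by rewrite -/Y Yab0 mxE.
Qed.

End SignedModules.

Unset Implicit Arguments. Set Strict Implicit.

Theorem proposition5p7 (R : realType) (m : nat) (hm : (m %% 8 = 3)%N)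
  (d e : nat) (Jp : 'I_m -> 'M[R]_d) (Jm : 'I_m -> 'M[R]_e)
  (hJp : irr_module_sign Jp true) (hJm : irr_module_sign Jm false)
  (p q : nat) :
  Lag_nonempty (sum_rep Jp Jm p q) -> p = q.
Proof.
move=> lag; have odd_m : odd m by rewrite (divn_eq m 8) hm oddD oddM andbF.
have de := irr_module_sign_dim_eq odd_m hJp hJm.
have [modp [[d_gt0 _] Kp]] := hJp; have [modm [_ Km]] := hJm.
have := lagrangian_mxtrace_Kmat odd_m (sum_rep_module p q modp modm) lag.
rewrite Kmat_sum_rep Kp Km mxtrace_sum_blk_sign => /eqP.
by rewrite subr_eq0 eqr_nat -de eqn_pmul2l // => /eqP.
Qed.
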